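(* Let $L'$ be the first-order language over two binary relation symbols $R$ and $E$. There is a sentence of $L'$ that does not use equality and uses only the three variables $x,y,z$, which is preserved under substructures but is not equivalent to any universal formula of $L'$ using only the variables $x,y,z$ (in particular, not to any such equality-free universal formula).
   Context: ''Uses only the variables $x,y,z$'' means every variable occurring in the formula, free or bound, is one of $x,y,z$ (variables may be requantified). A universal formula is one built from atomic formulas and negations of atomic formulas using only conjunction, disjunction and universal quantification. A sentence is preserved under substructures if whenever it holds in a structure it holds in the induced structure on every nonempty subset of the universe. Equivalence means truth in the same structures. *)

From Stdlib Require Import Bool.

(* The only variables available: x, y, z.  Hence every formula of type
   [form] "uses only the variables x, y, z" (free or bound). *)
Inductive var : Type := vx | vy | vz.

Definition var_eqb (u v : var) : bool :=
  match u, v with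
  | vx, vx | vy, vy | vz, vz => true
  | _, _ => false
  end.

Inductive form : Type :=
  | FR  (u v : var)
  | FE  (u v : var)
  | FEq (u v : var)
  | FNot (f : form)
  | FAnd (f g : form)
  | FOr  (f g : form)
  | FImp (f g : form)
  | FAll (v : var) (f : form)
  | FEx  (v : var) (f : form).

Fixpoint free (w : var) (f : form) : bool :=
  match f with
  | FR u v | FE u v | FEq u v => var_eqb w u || var_eqb w v
  | FNot g => free w g
  | FAnd g h | FOr g h | FImp g h => free w g || free w h
  | FAll v g | FEx v g => negb (var_eqb w v) && free w g
  end.

Definition sentence (f : form) : Prop := forall w, free w f = false.

Fixpoint eq_free (f : form) : bool :=
  match f with
  | FR _ _ | FE _ _ => true
  | FEq _ _ => false
  | FNot g => eq_free g
  | FAnd g h | FOr g h | FImp g h => eq_free g && eq_free h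
  | FAll _ g | FEx _ g => eq_free g
  end.

Definition atomic (f : form) : Prop :=
  match f with
  | FR _ _ | FE _ _ | FEq _ _ => True
  | _ => False
  end.

Inductive universal : form -> Prop :=
  | univ_atom f : atomic f -> universal f
  | univ_natom f : atomic f -> universal (FNot f)
  | univ_and f g : universal f -> universal g -> universal (FAnd f g)
  | univ_or f g : universal f -> universal g -> universal (FOr f g)
  | univ_all v f : universal f -> universal (FAll v f).

Record Structure : Type := {
  dom : Type;
  dom_inh : inhabited dom;
  relR : dom -> dom -> Prop;
  relE : dom -> dom -> Prop
}.

Definition upd (M : Structure) (a : var -> dom M) (v : var) (d : dom M)
  : var -> dom M := fun w => if var_eqb w v then d else a w.

Fixpoint sat (M : Structure) (a : var -> dom M) (f : form) : Prop :=
  match f with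
  | FR u v => relR M (a u) (a v)
  | FE u v => relE M (a u) (a v)
  | FEq u v => a u = a v
  | FNot g => ~ sat M a g
  | FAnd g h => sat M a g /\ sat M a h
  | FOr g h => sat M a g \/ sat M a h
  | FImp g h => sat M a g -> sat M a h
  | FAll v g => forall d : dom M, sat M (upd M a v d) g
  | FEx v g => exists d : dom M, sat M (upd M a v d) g
  end.

Definition holds (M : Structure) (f : form) : Prop :=
  forall a : var -> dom M, sat M a f.

Definition substr (M : Structure) (S : dom M -> Prop) (x0 : dom M)
  (Hx0 : S x0) : Structure :=
  {| dom := {x : dom M | S x};
     dom_inh := inhabits (exist S x0 Hx0);
     relR := fun p q => relR M (proj1_sig p) (proj1_sig q);
     relE := fun p q => relE M (proj1_sig p) (proj1_sig q) |}.

Definition preserved_under_substructures (f : form) : Prop :=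
  forall (M : Structure) (S : dom M -> Prop) (x0 : dom M) (Hx0 : S x0),
    holds M f -> holds (substr M S x0 Hx0) f.

Definition equivalent (f g : form) : Prop :=
  forall (M : Structure) (a : var -> dom M), sat M a f <-> sat M a g.

From Stdlib Require Import Bool List Arith Lia Classical.
Import ListNotations.

(* [phi] says that R is a total preorder with fewer than [K] levels and that
   no four levels are pairwise joined by E-edges; levels are definable with
   three variables used alternately.  In a substructure the levels map
   strictly increasingly into the levels of the ambient structure and E-edges
   are inherited, so [phi] is preserved.  The 4-element chain with E meaning
   "different level" violates [phi], while the 9-element chain whose E joins
   levels of different colour under a 3-colouring satisfies it.  Duplicator
   wins the three-pebble game played from the 4-chain into the 9-chain
   (checked exhaustively), so every universal three-variable formula true in
   the 9-chain is true in the 4-chain, and no such formula is equivalent to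
   [phi]. *)

Lemma upd_eq M a v d : upd M a v d v = d.
Proof. unfold upd; destruct v; reflexivity. Qed.

Lemma upd_neq M a v d u : u <> v -> upd M a v d u = a u.
Proof. unfold upd; destruct u, v; simpl; congruence. Qed.

Ltac upd_simpl :=
  repeat first [rewrite upd_eq in * | rewrite upd_neq in * by congruence].

Definition trueF (u : var) : form := FOr (FR u u) (FNot (FR u u)).
Definition falseF : form := FNot (FAll vx (trueF vx)).

(* In a total preorder, [belowF p q] says that [p] lies strictly below [q]. *)
Definition belowF (p q : var) : form := FNot (FR q p).

Fixpoint at_level (M : Structure) (i : nat) (x : dom M) : Prop :=
  match i with
  | 0 => forall y, relR M x y
  | S i => exists y, ~ relR M x y /\ at_level M i y /\
             forall w, ~ relR M x w -> relR M w y
  end.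

(* The roles of [u] and [v] swap at each step, so three variables suffice. *)
Fixpoint levelF (i : nat) (u v w : var) : form :=
  match i with
  | 0 => FAll v (FR u v)
  | S i => FEx v (FAnd (belowF v u)
             (FAnd (levelF i v u w) (FAll w (FImp (belowF w u) (FR w v)))))
  end.

Fixpoint descending_chain (M : Structure) (n : nat) (x : dom M) : Prop :=
  match n with
  | 0 => True
  | S n => exists y, ~ relR M x y /\ descending_chain M n y
  end.

Fixpoint chainF (n : nat) (u v : var) : form :=
  match n with
  | 0 => trueF u
  | S n => FEx v (FAnd (belowF v u) (chainF n v u))
  end.

Lemma sat_levelF i : forall u v w, u <> v -> v <> w -> u <> w ->
  forall M a, sat M a (levelF i u v w) <-> at_level M i (a u).
Proof.
  induction i as [|i IH]; intros u v w Huv Hvw Huw M a; simpl.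
  - split; intros H d; [specialize (H d)|]; upd_simpl; auto.
  - split.
    + intros [d [Hbelow [Hlevel Hmax]]]. upd_simpl.
      apply IH in Hlevel; [|congruence..]. upd_simpl.
      exists d; split; [exact Hbelow|split; [exact Hlevel|]].
      intros e He. specialize (Hmax e). upd_simpl. auto.
    + intros [d [Hbelow [Hlevel Hmax]]]. exists d. upd_simpl.
      split; [exact Hbelow|split].
      * apply IH; [congruence..|]. upd_simpl. exact Hlevel.
      * intros e. upd_simpl. auto.
Qed.

Lemma sat_chainF n : forall u v, u <> v -> forall M a,
  sat M a (chainF n u v) <-> descending_chain M n (a u).
Proof.
  induction n as [|n IH]; intros u v Huv M a; simpl.
  - split; auto. intros _. apply classic.
  - split.
    + intros [d [Hbelow Hchain]]. upd_simpl.
      apply IH in Hchain; [|congruence]. upd_simpl. eauto.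
    + intros [d [Hbelow Hchain]]. exists d. upd_simpl. split; auto.
      apply IH; [congruence|]. upd_simpl. exact Hchain.
Qed.

Lemma bounded_max (P : nat -> Prop) n :
  (exists j, P j) -> (forall j, P j -> j <= n) ->
  exists j, P j /\ forall k, P k -> k <= j.
Proof.
  revert P; induction n as [|n IH]; intros P [j0 Hj0] Hbound.
  - exists j0. split; auto. intros k Hk. specialize (Hbound k Hk). lia.
  - destruct (classic (P (S n))) as [HSn|HSn].
    + exists (S n). auto.
    + apply IH; [eauto|]. intros j Hj. specialize (Hbound j Hj).
      destruct (Nat.eq_dec j (S n)); [subst; contradiction|lia].
Qed.

Definition total_preorder (M : Structure) : Prop :=
  (forall x y, relR M x y \/ relR M y x) /\
  (forall x y z, relR M x y -> relR M y z -> relR M x z).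

Section Levels.

Variable M : Structure.
Hypothesis HM : total_preorder M.

Lemma at_level_le i : forall j x y, at_level M i x -> at_level M j y -> i <= j ->
  relR M x y.
Proof.
  destruct HM as [Htot Htrans].
  induction i as [|i IH]; intros j x y Hx Hy Hij; [exact (Hx y)|].
  destruct j as [|j]; [lia|].
  destruct Hx as [x' [_ [Hx' Hxmax]]], Hy as [y' [Hyy' [Hy' _]]].
  apply NNPP. intros Hxy.
  apply Hyy', (Htrans _ x'); [exact (Hxmax y Hxy)|].
  apply (IH j); auto. lia.
Qed.

Lemma at_level_lt i j x y : at_level M i x -> at_level M j y -> i < j ->
  ~ relR M y x.
Proof.
  intros Hx Hy Hij Hyx. destruct j as [|j]; [lia|].
  destruct Hy as [y' [Hyy' [Hy' _]]].
  apply Hyy', (proj2 HM _ x); [exact Hyx|].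
  apply (at_level_le i j); auto. lia.
Qed.

Lemma at_level_unique i j x : at_level M i x -> at_level M j x -> i = j.
Proof.
  intros Hi Hj.
  assert (Hxx : relR M x x) by (destruct (proj1 HM x x); auto).
  destruct (Nat.lt_trichotomy i j) as [Hlt|[Heq|Hlt]]; auto; exfalso.
  - exact (at_level_lt i j x x Hi Hj Hlt Hxx).
  - exact (at_level_lt j i x x Hj Hi Hlt Hxx).
Qed.

Lemma at_level_equiv i x x' : relR M x x' -> relR M x' x ->
  at_level M i x -> at_level M i x'.
Proof.
  destruct HM as [_ Htrans]. intros Hxx' Hx'x Hx.
  destruct i as [|i]; simpl in *.
  - intros y. eauto.
  - destruct Hx as [y [Hxy [Hy Hymax]]]. exists y.
    split; [|split; [exact Hy|]].
    + intros Hx'y. apply Hxy. eauto.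
    + intros w Hx'w. apply Hymax. intros Hxw. apply Hx'w. eauto.
Qed.

(* Without a strictly descending chain of length [n+1] below [x], the
   elements strictly below [x] have levels at most [n-1]; [x] sits one level
   above the highest of them. *)
Lemma at_level_exists n : forall x, ~ descending_chain M (S n) x ->
  exists i, i <= n /\ at_level M i x.
Proof.
  induction n as [|n IH]; intros x Hchain.
  - exists 0. split; auto. intros y. apply NNPP. intros Hxy.
    apply Hchain. exists y. split; [exact Hxy|exact I].
  - destruct (classic (exists y, ~ relR M x y)) as [[y0 Hy0]|Hmin].
    + assert (Hbelow : forall y, ~ relR M x y -> exists j, j <= n /\ at_level M j y).
      { intros y Hy. apply IH. intros Hc. apply Hchain. exists y. auto. }
      destruct (bounded_max (fun j => exists y, ~ relR M x y /\ at_level M j y) n)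
        as [j [[y [Hxy Hy]] Hjmax]].
      * destruct (Hbelow y0 Hy0) as [j0 [_ Hj0]]. eauto.
      * intros j [y [Hxy Hy]]. destruct (Hbelow y Hxy) as [j' [Hj' Hy']].
        rewrite (at_level_unique j j' y); auto.
      * exists (S j). split.
        -- destruct (Hbelow y Hxy) as [j' [Hj' Hy']].
           rewrite (at_level_unique j j' y); auto. lia.
        -- exists y. split; [exact Hxy|split; [exact Hy|]].
           intros w Hxw. destruct (Hbelow w Hxw) as [j' [_ Hw]].
           apply (at_level_le j' j); auto. apply Hjmax. eauto.
    + exists 0. split; [lia|]. intros y. apply NNPP. intros Hxy. apply Hmin. eauto.
Qed.

End Levels.

Definition K : nat := 9.

Definition linked (M : Structure) (p q : nat) : Prop :=
  exists x y, at_level M p x /\ relE M x y /\ at_level M q y.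

Definition linkedF (p q : nat) : form :=
  FEx vx (FAnd (levelF p vx vy vz) (FEx vy (FAnd (FE vx vy) (levelF q vy vx vz)))).

Lemma sat_linkedF M a p q : sat M a (linkedF p q) <-> linked M p q.
Proof.
  unfold linkedF, linked; simpl. split.
  - intros [d [Hd [e [Hde He]]]].
    apply sat_levelF in Hd, He; [|discriminate..]. upd_simpl. eauto.
  - intros [d [e [Hd [Hde He]]]]. exists d. split.
    + apply sat_levelF; [discriminate..|]. upd_simpl. exact Hd.
    + exists e. upd_simpl. split; [exact Hde|].
      apply sat_levelF; [discriminate..|]. upd_simpl. exact He.
Qed.

Definition quad : Type := nat * nat * nat * nat.

Definition linked4 (M : Structure) (t : quad) : Prop :=
  let '(p, q, r, s) := t in
  linked M p q /\ linked M p r /\ linked M p s /\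
  linked M q r /\ linked M q s /\ linked M r s.

Definition linked4F (t : quad) : form :=
  let '(p, q, r, s) := t in
  FAnd (linkedF p q) (FAnd (linkedF p r) (FAnd (linkedF p s)
    (FAnd (linkedF q r) (FAnd (linkedF q s) (linkedF r s))))).

Lemma sat_linked4F M a t : sat M a (linked4F t) <-> linked4 M t.
Proof.
  destruct t as [[[p q] r] s]; unfold linked4F, linked4; cbn [sat].
  rewrite !sat_linkedF. tauto.
Qed.

Definition increasing (t : quad) : bool :=
  let '(p, q, r, s) := t in (p <? q) && (q <? r) && (r <? s).

Definition increasing_quads : list quad :=
  filter increasing (list_prod (list_prod (list_prod (seq 0 K) (seq 0 K)) (seq 0 K)) (seq 0 K)).

Lemma in_increasing_quads p q r s :
  In (p, q, r, s) increasing_quads <-> p < q /\ q < r /\ r < s /\ s < K.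
Proof.
  unfold increasing_quads. rewrite filter_In, !in_prod_iff, !in_seq; simpl.
  rewrite !andb_true_iff, !Nat.ltb_lt. lia.
Qed.

Definition has_linked4 (M : Structure) : Prop :=
  exists t, In t increasing_quads /\ linked4 M t.

Definition has_linked4F : form :=
  fold_right (fun t f => FOr (linked4F t) f) falseF increasing_quads.

Lemma sat_has_linked4F M a : sat M a has_linked4F <-> has_linked4 M.
Proof.
  unfold has_linked4F, has_linked4.
  induction increasing_quads as [|t l IH]; simpl.
  - split; [intros H; exfalso; apply H; intros d; apply classic|intros [t [[] _]]].
  - cbn [sat]. rewrite sat_linked4F, IH. split.
    + intros [H|[t' [Ht' H]]]; eauto.
    + intros [t' [[<-|Ht'] H]]; eauto.
Qed.

Definition height_bounded (M : Structure) : Prop :=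
  total_preorder M /\ forall x, ~ descending_chain M K x.

Definition totalF : form := FAll vx (FAll vy (FOr (FR vx vy) (FR vy vx))).
Definition transitiveF : form :=
  FAll vx (FAll vy (FAll vz (FImp (FAnd (FR vx vy) (FR vy vz)) (FR vx vz)))).
Definition height_boundedF : form :=
  FAnd totalF (FAnd transitiveF (FNot (FEx vx (chainF K vx vy)))).

Lemma sat_height_boundedF M a : sat M a height_boundedF <-> height_bounded M.
Proof.
  unfold height_boundedF, height_bounded, total_preorder, totalF, transitiveF.
  cbn [sat]. split.
  - intros [Htot [Htrans Hchain]]. split; [split|].
    + intros x y. specialize (Htot x y). upd_simpl. exact Htot.
    + intros x y z Hxy Hyz. specialize (Htrans x y z). upd_simpl. auto.
    + intros x Hx. apply Hchain. exists x.
      apply sat_chainF; [discriminate|]. upd_simpl. exact Hx.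
  - intros [[Htot Htrans] Hchain]. split; [|split].
    + intros x y. upd_simpl. auto.
    + intros x y z. upd_simpl. intros [Hxy Hyz]. eauto.
    + intros [x Hx]. apply sat_chainF in Hx; [|discriminate].
      upd_simpl. exact (Hchain x Hx).
Qed.

Definition phi : form := FAnd height_boundedF (FNot has_linked4F).

Lemma sat_phi M a : sat M a phi <-> height_bounded M /\ ~ has_linked4 M.
Proof. unfold phi; cbn [sat]. rewrite sat_height_boundedF, sat_has_linked4F. tauto. Qed.

Section Embedding.

Variables M N : Structure.
Variable f : dom N -> dom M.
Hypothesis f_R : forall x y, relR N x y <-> relR M (f x) (f y).
Hypothesis f_E : forall x y, relE N x y -> relE M (f x) (f y).

Lemma descending_chain_map n : forall x,
  descending_chain N n x -> descending_chain M n (f x).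
Proof.
  induction n as [|n IH]; simpl; auto.
  intros x [y [Hxy Hy]]. exists (f y). rewrite <- f_R. auto.
Qed.

Lemma height_bounded_map : height_bounded M -> height_bounded N.
Proof.
  intros [[Htot Htrans] Hchain]. split; [split|].
  - intros x y. rewrite !f_R. apply Htot.
  - intros x y z. rewrite !f_R. apply Htrans.
  - intros x Hx. exact (Hchain (f x) (descending_chain_map K x Hx)).
Qed.

Section Bounded.

Hypothesis HM : height_bounded M.

Let HN : height_bounded N := height_bounded_map HM.

Lemma at_level_map_exists x : exists j, j < K /\ at_level M j (f x).
Proof.
  destruct (at_level_exists M (proj1 HM) (K - 1) (f x)) as [j [Hj Hx]].
  - apply (proj2 HM).
  - exists j. split; [unfold K in *; lia|exact Hx].
Qed.

Lemma at_level_map_lt i i' j j' x x' :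
  at_level N i x -> at_level N i' x' -> i < i' ->
  at_level M j (f x) -> at_level M j' (f x') -> j < j'.
Proof.
  intros Hx Hx' Hii' Hfx Hfx'.
  destruct (le_lt_dec j' j) as [Hj'j|]; auto. exfalso.
  apply (at_level_lt N (proj1 HN) i i' x x' Hx Hx' Hii'), f_R.
  exact (at_level_le M (proj1 HM) j' j _ _ Hfx' Hfx Hj'j).
Qed.

Lemma at_level_map_same i j x x' :
  at_level N i x -> at_level N i x' -> at_level M j (f x) -> at_level M j (f x').
Proof.
  intros Hx Hx' Hfx. apply (at_level_equiv M (proj1 HM) j (f x)); [apply f_R..|exact Hfx].
  - exact (at_level_le N (proj1 HN) i i x x' Hx Hx' (le_n i)).
  - exact (at_level_le N (proj1 HN) i i x' x Hx' Hx (le_n i)).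
Qed.

Lemma linked_map i i' j j' x x' :
  at_level N i x -> at_level N i' x' ->
  at_level M j (f x) -> at_level M j' (f x') ->
  linked N i i' -> linked M j j'.
Proof.
  intros Hx Hx' Hfx Hfx' [y [y' [Hy [Hyy' Hy']]]].
  exists (f y), (f y'). split; [|split].
  - exact (at_level_map_same i j x y Hx Hy Hfx).
  - exact (f_E y y' Hyy').
  - exact (at_level_map_same i' j' x' y' Hx' Hy' Hfx').
Qed.

Lemma has_linked4_map : has_linked4 N -> has_linked4 M.
Proof.
  intros [[[[p q] r] s] [Hpqrs Hlinked]].
  apply in_increasing_quads in Hpqrs as (Hpq & Hqr & Hrs & _).
  pose proof Hlinked as ([x [y [Hx [_ Hy]]]] & [_ [z [_ [_ Hz]]]] &
                         [_ [w [_ [_ Hw]]]] & _).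
  destruct (at_level_map_exists x) as [jp [_ Hfx]].
  destruct (at_level_map_exists y) as [jq [_ Hfy]].
  destruct (at_level_map_exists z) as [jr [_ Hfz]].
  destruct (at_level_map_exists w) as [js [Hjs Hfw]].
  exists (jp, jq, jr, js). split.
  - apply in_increasing_quads. repeat split.
    + exact (at_level_map_lt p q jp jq x y Hx Hy Hpq Hfx Hfy).
    + exact (at_level_map_lt q r jq jr y z Hy Hz Hqr Hfy Hfz).
    + exact (at_level_map_lt r s jr js z w Hz Hw Hrs Hfz Hfw).
    + exact Hjs.
  - destruct Hlinked as (Hpq' & Hpr & Hps & Hqr' & Hqs & Hrs').
    repeat split.
    + exact (linked_map p q jp jq x y Hx Hy Hfx Hfy Hpq').
    + exact (linked_map p r jp jr x z Hx Hz Hfx Hfz Hpr).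
    + exact (linked_map p s jp js x w Hx Hw Hfx Hfw Hps).
    + exact (linked_map q r jq jr y z Hy Hz Hfy Hfz Hqr').
    + exact (linked_map q s jq js y w Hy Hw Hfy Hfw Hqs).
    + exact (linked_map r s jr js z w Hz Hw Hfz Hfw Hrs').
Qed.

End Bounded.

Lemma phi_map : holds M phi -> holds N phi.
Proof.
  intros HMphi b.
  destruct (proj1 (sat_phi M (fun w => f (b w))) (HMphi _)) as [HM Hno].
  apply sat_phi. split.
  - exact (height_bounded_map HM).
  - intros HN. exact (Hno (has_linked4_map HM HN)).
Qed.

End Embedding.

Lemma phi_preserved : preserved_under_substructures phi.
Proof.
  intros M S x0 Hx0 HM.
  apply (phi_map M (substr M S x0 Hx0) (@proj1_sig _ S)); [simpl; tauto..|exact HM].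
Qed.

Section FiniteModelChecking.

Variable M : Structure.
Variable elems : list (dom M).
Variables relRb relEb eqb : dom M -> dom M -> bool.
Hypothesis elems_complete : forall x, In x elems.
Hypothesis relRb_spec : forall x y, relRb x y = true <-> relR M x y.
Hypothesis relEb_spec : forall x y, relEb x y = true <-> relE M x y.
Hypothesis eqb_spec : forall x y, eqb x y = true <-> x = y.

Fixpoint satb (a : var -> dom M) (f : form) : bool :=
  match f with
  | FR u v => relRb (a u) (a v)
  | FE u v => relEb (a u) (a v)
  | FEq u v => eqb (a u) (a v)
  | FNot g => negb (satb a g)
  | FAnd g h => if satb a g then satb a h else false
  | FOr g h => if satb a g then true else satb a h
  | FImp g h => if satb a g then satb a h else true
  | FAll v g => forallb (fun d => satb (upd M a v d) g) elems
  | FEx v g => existsb (fun d => satb (upd M a v d) g) elems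
  end.

Lemma satb_sat f : forall a, satb a f = true <-> sat M a f.
Proof.
  induction f as [u v|u v|u v|g IHg|g IHg h IHh|g IHg h IHh|g IHg h IHh|v g IHg|v g IHg];
    intros a; simpl; auto.
  - rewrite negb_true_iff, <- IHg. destruct (satb a g); intuition congruence.
  - rewrite <- IHg, <- IHh. destruct (satb a g); intuition congruence.
  - rewrite <- IHg, <- IHh. destruct (satb a g); intuition congruence.
  - rewrite <- IHg, <- IHh.
    destruct (satb a g), (satb a h); intuition congruence.
  - rewrite forallb_forall. split; intros H d; [apply IHg, H, elems_complete|].
    intros _. apply IHg, H.
  - rewrite existsb_exists. split; intros [d Hd]; exists d.
    + apply IHg, Hd.
    + split; [apply elems_complete|apply IHg, Hd].
Qed.

End FiniteModelChecking.

Section UniversalTransfer.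

Variables M N : Structure.
Variable G : (var -> dom M) -> (var -> dom N) -> Prop.
Hypothesis G_atomic : forall a b f, G a b -> atomic f -> (sat N b f <-> sat M a f).
Hypothesis G_forth : forall a b v d, G a b -> exists d', G (upd M a v d) (upd N b v d').

Lemma universal_transfer psi : universal psi ->
  forall a b, G a b -> sat N b psi -> sat M a psi.
Proof.
  induction 1 as [f Hf|f Hf|f g _ IHf _ IHg|f g _ IHf _ IHg|v f _ IHf];
    intros a b Hab Hb; simpl in *.
  - apply (G_atomic a b f Hab Hf), Hb.
  - rewrite <- (G_atomic a b f Hab Hf). exact Hb.
  - destruct Hb. eauto.
  - destruct Hb; [left|right]; eauto.
  - intros d. destruct (G_forth a b v d Hab) as [d' Hd']. eauto.
Qed.

End UniversalTransfer.

Section ColouredChain.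

Variables (T : Type) (t0 : T) (lev col : T -> nat).

Definition coloured_chain : Structure :=
  {| dom := T; dom_inh := inhabits t0;
     relR := fun x y => lev x <= lev y;
     relE := fun x y => col x <> col y |}.

Definition leb_lev (x y : T) : bool := lev x <=? lev y.
Definition neb_col (x y : T) : bool := negb (col x =? col y).
Definition eqb_lev (x y : T) : bool := lev x =? lev y.

Lemma leb_lev_spec x y : leb_lev x y = true <-> relR coloured_chain x y.
Proof. apply Nat.leb_le. Qed.

Lemma neb_col_spec x y : neb_col x y = true <-> relE coloured_chain x y.
Proof. unfold neb_col. rewrite negb_true_iff. apply Nat.eqb_neq. Qed.

Lemma eqb_lev_spec : (forall x y, lev x = lev y -> x = y) ->
  forall x y, eqb_lev x y = true <-> x = y.
Proof.
  intros Hinj x y. unfold eqb_lev. rewrite Nat.eqb_eq.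
  split; [apply Hinj|intros ->; reflexivity].
Qed.

End ColouredChain.

Inductive A4 := A0 | A1 | A2 | A3.
Inductive B9 := B0 | B1 | B2 | B3 | B4 | B5 | B6 | B7 | B8.

Definition levA (x : A4) : nat :=
  match x with A0 => 0 | A1 => 1 | A2 => 2 | A3 => 3 end.
Definition levB (x : B9) : nat :=
  match x with
  | B0 => 0 | B1 => 1 | B2 => 2 | B3 => 3 | B4 => 4
  | B5 => 5 | B6 => 6 | B7 => 7 | B8 => 8
  end.
(* Linked levels of [chain9] get different colours, so no four of its levels
   are pairwise linked. *)
Definition colB (x : B9) : nat :=
  match x with
  | B0 => 0 | B1 => 1 | B2 => 2 | B3 => 0 | B4 => 1
  | B5 => 0 | B6 => 2 | B7 => 0 | B8 => 1
  end.

Definition elemsA : list A4 := [A0; A1; A2; A3].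
Definition elemsB : list B9 := [B0; B1; B2; B3; B4; B5; B6; B7; B8].

Definition chain4 : Structure := coloured_chain A4 A0 levA levA.
Definition chain9 : Structure := coloured_chain B9 B0 levB colB.

Lemma elemsA_complete (x : A4) : In x elemsA.
Proof. destruct x; simpl; tauto. Qed.

Lemma elemsB_complete (x : B9) : In x elemsB.
Proof. destruct x; simpl; tauto. Qed.

Lemma levA_inj x y : levA x = levA y -> x = y.
Proof. destruct x, y; simpl; congruence. Qed.

Lemma levB_inj x y : levB x = levB y -> x = y.
Proof. destruct x, y; simpl; congruence. Qed.

Lemma satb_chain4 f a :
  satb chain4 elemsA (leb_lev A4 levA) (neb_col A4 levA) (eqb_lev A4 levA) a f = true
  <-> sat chain4 a f.
Proof.
  apply satb_sat; [exact elemsA_complete|apply leb_lev_spec|apply neb_col_spec|].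
  apply eqb_lev_spec, levA_inj.
Qed.

Lemma satb_chain9 f a :
  satb chain9 elemsB (leb_lev B9 levB) (neb_col B9 colB) (eqb_lev B9 levB) a f = true
  <-> sat chain9 a f.
Proof.
  apply satb_sat; [exact elemsB_complete|apply leb_lev_spec|apply neb_col_spec|].
  apply eqb_lev_spec, levB_inj.
Qed.

Lemma chain4_not_phi : ~ sat chain4 (fun _ => A0) phi.
Proof. rewrite <- satb_chain4. vm_compute. discriminate. Qed.

Lemma chain9_phi : sat chain9 (fun _ => B0) phi.
Proof. apply satb_chain9. vm_compute. reflexivity. Qed.

Definition vars : list var := [vx; vy; vz].

Lemma vars_complete u : In u vars.
Proof. destruct u; simpl; tauto. Qed.

Definition assign {T} (x y z : T) (u : var) : T :=
  match u with vx => x | vy => y | vz => z end.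

Definition same_atomic_type (x1 x2 : A4) (y1 y2 : B9) : bool :=
  Bool.eqb (leb_lev A4 levA x1 x2) (leb_lev B9 levB y1 y2) &&
  Bool.eqb (neb_col A4 levA x1 x2) (neb_col B9 colB y1 y2) &&
  Bool.eqb (eqb_lev A4 levA x1 x2) (eqb_lev B9 levB y1 y2).

(* Duplicator answers level [i] of [chain4] inside the window [2i .. 2i+2]
   of [chain9]. *)
Definition in_window (x : A4) (y : B9) : bool :=
  (2 * levA x <=? levB y) && (levB y <=? 2 * levA x + 2).

Definition simulates (a : var -> A4) (b : var -> B9) : bool :=
  forallb (fun u => in_window (a u) (b u) &&
    forallb (fun v => same_atomic_type (a u) (a v) (b u) (b v)) vars) vars.

Lemma simulates_ext a a' b b' :
  (forall u, a u = a' u) -> (forall u, b u = b' u) ->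
  simulates a b = simulates a' b'.
Proof. intros Ha Hb. unfold simulates; simpl. rewrite !Ha, !Hb. reflexivity. Qed.

Lemma upd_assign (M : Structure) (a : var -> dom M) (v : var) (d : dom M) u :
  upd M (assign (a vx) (a vy) (a vz)) v d u = upd M a v d u.
Proof. unfold upd. destruct (var_eqb u v); [|destruct u]; reflexivity. Qed.

Definition forth_checked : bool :=
  forallb (fun ax => forallb (fun ay => forallb (fun az =>
  forallb (fun bx => forallb (fun by' => forallb (fun bz =>
    let a := assign ax ay az in
    let b := assign bx by' bz in
    if simulates a b then
      forallb (fun v => forallb (fun d => existsb (fun d' =>
        simulates (upd chain4 a v d) (upd chain9 b v d')) elemsB) elemsA) vars
    else true)
  elemsB) elemsB) elemsB) elemsA) elemsA) elemsA.

Lemma forth_checked_true : forth_checked = true.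
Proof. vm_compute. reflexivity. Qed.

Lemma simulates_forth a b v d : simulates a b = true ->
  exists d', simulates (upd chain4 a v d) (upd chain9 b v d') = true.
Proof.
  intros Hab. pose proof forth_checked_true as Hforth. unfold forth_checked in Hforth.
  rewrite forallb_forall in Hforth. specialize (Hforth (a vx) (elemsA_complete _)).
  rewrite forallb_forall in Hforth. specialize (Hforth (a vy) (elemsA_complete _)).
  rewrite forallb_forall in Hforth. specialize (Hforth (a vz) (elemsA_complete _)).
  rewrite forallb_forall in Hforth. specialize (Hforth (b vx) (elemsB_complete _)).
  rewrite forallb_forall in Hforth. specialize (Hforth (b vy) (elemsB_complete _)).
  rewrite forallb_forall in Hforth. specialize (Hforth (b vz) (elemsB_complete _)).
  cbv zeta in Hforth.
  rewrite (simulates_ext _ a _ b), Hab in Hforth by (destruct u; reflexivity).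
  rewrite forallb_forall in Hforth.
  specialize (Hforth v (vars_complete v)). rewrite forallb_forall in Hforth.
  specialize (Hforth d (elemsA_complete d)).
  apply existsb_exists in Hforth as [d' [_ Hd']]. exists d'.
  rewrite <- Hd'. apply simulates_ext; intros u; symmetry.
  - exact (upd_assign chain4 a v d u).
  - exact (upd_assign chain9 b v d' u).
Qed.

Lemma simulates_same_atomic_type a b u v : simulates a b = true ->
  same_atomic_type (a u) (a v) (b u) (b v) = true.
Proof.
  unfold simulates. rewrite forallb_forall. intros Hab.
  specialize (Hab u (vars_complete u)). apply andb_prop in Hab as [_ Hab].
  rewrite forallb_forall in Hab. exact (Hab v (vars_complete v)).
Qed.

Lemma simulates_atomic a b f : simulates a b = true -> atomic f ->
  (sat chain9 b f <-> sat chain4 a f).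
Proof.
  intros Hab Hf. destruct f as [u v|u v|u v| | | | | |]; try contradiction;
    pose proof (simulates_same_atomic_type a b u v Hab) as Htype;
    unfold same_atomic_type in Htype; rewrite !andb_true_iff in Htype;
    destruct Htype as [[Hle Hedge] Heq]; apply Bool.eqb_prop in Hle, Hedge, Heq.
  - transitivity (leb_lev B9 levB (b u) (b v) = true); [symmetry; apply leb_lev_spec|].
    rewrite <- Hle. apply (leb_lev_spec A4 A0).
  - transitivity (neb_col B9 colB (b u) (b v) = true); [symmetry; apply neb_col_spec|].
    rewrite <- Hedge. apply (neb_col_spec A4 A0).
  - transitivity (eqb_lev B9 levB (b u) (b v) = true);
      [symmetry; apply eqb_lev_spec, levB_inj|].
    rewrite <- Heq. apply eqb_lev_spec, levA_inj.
Qed.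

Theorem mainTheorem8 :
  exists phi : form,
    sentence phi /\ eq_free phi = true /\
    preserved_under_substructures phi /\
    ~ (exists psi : form, universal psi /\ equivalent phi psi).
Proof.
  exists phi. split; [intros w; destruct w; vm_compute; reflexivity|].
  split; [vm_compute; reflexivity|].
  split; [exact phi_preserved|].
  intros [psi [Hpsi Hequiv]].
  apply chain4_not_phi, Hequiv.
  apply (universal_transfer chain4 chain9 (fun a b => simulates a b = true)
           simulates_atomic simulates_forth psi Hpsi
           (fun _ => A0) (fun _ => B0)).
  - vm_compute. reflexivity.
  - apply Hequiv, chain9_phi.
Qed.
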